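(* Let $W$ be a normal PO-dilator and $X$ a partial order. For all $s,t\in\mathcal T W(X)$, if $s\leq_{\mathcal T W(X)}t$ then $h_X(s)\leq h_X(t)$.
   Context: A quasi embedding between partial orders $X,Y$ is a function $f$ with $f(x)\leq_Y f(y)\Rightarrow x\leq_X y$; an embedding also satisfies the converse. $\mathrm{PO}$ is the category of partial orders and quasi embeddings. $[X]^{<\omega}$ denotes the finite subsets of $X$, with $[f]^{<\omega}(a)=\{f(x)\mid x\in a\}$; subsets of partial orders are regarded as suborders and $\iota_a$ denotes an inclusion map. A PO-dilator is a functor $W:\mathrm{PO}\to\mathrm{PO}$ mapping embeddings to embeddings, with a natural transformation $\operatorname{supp}^W:W\Rightarrow[\cdot]^{<\omega}$ such that for every embedding $f:X\to Y$, $\operatorname{rng}(W(f))=\{\sigma\in W(Y)\mid\operatorname{supp}^W_Y(\sigma)\subseteq\operatorname{rng}(f)\}$. For a partial order $X$ and finite $a,b\subseteq X$, write $a\leq^{\mathrm{fin}}_X b$ iff for every $x\in a$ there is $y\in b$ with $x\leq_X y$. $W$ is normal if $\sigma\leq_{W(X)}\tau$ implies $\operatorname{supp}^W_X(\sigma)\leq^{\mathrm{fin}}_X\operatorname{supp}^W_X(\tau)$ for all $X$ and $\sigma,\tau\in W(X)$. For a normal PO-dilator $W$ and a partial order $X$, the set of terms $\mathcal T W(X)$ and the relation $\leq_{\mathcal T W(X)}$ are defined by simultaneous recursion. Terms: (i) $\overline x\in\mathcal T W(X)$ for each $x\in X$; (ii) for each finite $a\subseteq\mathcal T W(X)$ on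 which the restriction of $\leq_{\mathcal T W(X)}$ is a partial order, and each $\sigma\in W(a)$ (with $a$ so ordered) with $\operatorname{supp}^W_a(\sigma)=a$, a term $\circ(a,\sigma)\in\mathcal T W(X)$. Relation: $s\leq_{\mathcal T W(X)}t$ iff (i') $s=\overline x$, $t=\overline y$ with $x\leq_X y$; or (ii') $t=\circ(b,\tau)$ and $s\leq_{\mathcal T W(X)}t'$ for some $t'\in b$; or (iii') $s=\circ(a,\sigma)$, $t=\circ(b,\tau)$, the restriction of $\leq_{\mathcal T W(X)}$ to $a\cup b$ is a partial order, and $W(\iota_a)(\sigma)\leq_{W(a\cup b)}W(\iota_b)(\tau)$ with $\iota_a:a\hookrightarrow a\cup b$, $\iota_b:b\hookrightarrow a\cup b$ the inclusions. (The recursion is along the length $l(\overline x)=0$, $l(\circ(a,\sigma))=1+\sum_{r\in a}2\,l(r)$: membership of $r$ by recursion on $l(r)$, $s\leq t$ by recursion on $l(s)+l(t)$.) The height $h_X:\mathcal T W(X)\to\mathbb N$ is given by $h_X(\overline x)=0$ and $h_X(\circ(a,\sigma))=\max(\{0\}\cup\{h_X(r)+1\mid r\in a\})$. *)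

From mathcomp Require Import all_boot.
From Stdlib Require List.

Set Implicit Arguments.
Unset Strict Implicit.
Unset Printing Implicit Defensive.

Record POax (T : Type) (R : T -> T -> Prop) : Prop := {
  po_refl  : forall x, R x x;
  po_trans : forall x y z, R x y -> R y z -> R x z;
  po_anti  : forall x y, R x y -> R y x -> x = y }.

Record PO := MkPO { car :> Type; ple : car -> car -> Prop; pax : POax ple }.
Arguments ple {p} _ _.

Record QE (X Y : PO) := MkQE {
  qfun :> car X -> car Y;
  qfun_qe : forall x y, ple (qfun x) (qfun y) -> ple x y }.

Definition is_embedding (X Y : PO) (f : QE X Y) : Prop :=
  forall x y, ple x y -> ple (f x) (f y).

Definition idQE (X : PO) : QE X X := @MkQE X X (fun x => x) (fun x y h => h).

Definition compQE (X Y Z : PO) (g : QE Y Z) (f : QE X Y) : QE X Z :=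
  @MkQE X Z (fun x => g (f x))
    (fun x y h => qfun_qe (qfun_qe h)).

(* PO-dilators.  Finite subsets [X]^{<omega} are represented by lists,  *)
(* compared only through membership (List.In).                          *)

Record PODilator := MkPOD {
  dW :> PO -> PO;
  dmap : forall X Y : PO, QE X Y -> QE (dW X) (dW Y);
  (* functoriality (morphisms are functions, hence extensional) *)
  dmap_ext : forall X Y (f g : QE X Y), (forall x, f x = g x) ->
               forall s, dmap f s = dmap g s;
  dmap_id : forall X (s : dW X), dmap (idQE X) s = s;
  dmap_comp : forall X Y Z (f : QE X Y) (g : QE Y Z) (s : dW X),
      dmap (compQE g f) s = dmap g (dmap f s);
  dmap_emb : forall X Y (f : QE X Y), is_embedding f -> is_embedding (dmap f);
  dsupp : forall X : PO, dW X -> list (car X);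
  dsupp_nat : forall X Y (f : QE X Y) (s : dW X) (y : car Y),
      List.In y (dsupp (dmap f s)) <-> exists x, List.In x (dsupp s) /\ f x = y;
  dsupp_rng : forall X Y (f : QE X Y), is_embedding f ->
      forall t : dW Y, (exists s, dmap f s = t) <->
                       (forall y, List.In y (dsupp t) -> exists x, f x = y) }.

Definition normal (D : PODilator) : Prop :=
  forall (X : PO) (s t : D X), ple s t ->
    forall x, List.In x (dsupp s) -> exists y, List.In y (dsupp t) /\ ple x y.

Definition ordPO (n : nat) (R : 'I_n -> 'I_n -> Prop) (H : POax R) : PO :=
  @MkPO 'I_n R H.

(* Raw terms.  A term o(a, sigma) is represented by an enumeration      *)
(* ch : 'I_n -> raw of the finite set a, the order R on 'I_n that       *)
(* corresponds to the order of a, and sigma in W('I_n, R) (the copy of   *)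
(* W(a) along the isomorphism 'I_n ~ a).  Identity of terms is the       *)
(* relation [eqv] below (invariance under re-enumeration).             *)

Section Terms.
Variables (D : PODilator) (X : PO).

Inductive raw : Type :=
| Var : car X -> raw
| Node : forall (n : nat) (R : 'I_n -> 'I_n -> Prop) (H : POax R),
    car (D (ordPO H)) -> ('I_n -> raw) -> raw.

Fixpoint eqv (s t : raw) {struct s} : Prop :=
  match s, t with
  | Var x, Var y => x = y
  | Node n R H sg ch, Node m R' H' tau ch' =>
      exists f : QE (ordPO H) (ordPO H'),
        bijective f /\ is_embedding f /\
        (forall i, eqv (ch i) (ch' (f i))) /\ dmap D f sg = tau
  | _, _ => False
  end.

Fixpoint len (s : raw) : nat :=
  match s with
  | Var _ => 0
  | Node n _ _ _ ch => 1 + sumn (map (fun i => 2 * len (ch i)) (enum 'I_n))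
  end.

Fixpoint height (s : raw) : nat :=
  match s with
  | Var _ => 0
  | Node n _ _ _ ch => foldr maxn 0 (map (fun i => (height (ch i)).+1) (enum 'I_n))
  end.

(* clause (iii'), relative to the relation L used on elements of a and b:
   a \cup b is represented by 'I_k with inclusions ia, ib (identifying
   equal terms), the restriction of L to a \cup b is the partial order Ru,
   and W(ia)(sg) <= W(ib)(tau) in W(a \cup b). *)
Definition union_le (L : raw -> raw -> Prop)
    (n : nat) (R : 'I_n -> 'I_n -> Prop) (H : POax R) (sg : D (ordPO H))
    (ch : 'I_n -> raw)
    (m : nat) (R' : 'I_m -> 'I_m -> Prop) (H' : POax R') (tau : D (ordPO H'))
    (ch' : 'I_m -> raw) : Prop :=
  exists (k : nat) (Ru : 'I_k -> 'I_k -> Prop) (Hu : POax Ru)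
         (ia : QE (ordPO H) (ordPO Hu)) (ib : QE (ordPO H') (ordPO Hu)),
    injective ia /\ injective ib /\
    (forall i j, ia i = ib j <-> eqv (ch i) (ch' j)) /\
    (forall l, (exists i, ia i = l) \/ (exists j, ib j = l)) /\
    (forall i i', Ru (ia i) (ia i') <-> L (ch i) (ch i')) /\
    (forall i j, Ru (ia i) (ib j) <-> L (ch i) (ch' j)) /\
    (forall j i, Ru (ib j) (ia i) <-> L (ch' j) (ch i)) /\
    (forall j j', Ru (ib j) (ib j') <-> L (ch' j) (ch' j')) /\
    ple (dmap D ia sg) (dmap D ib tau).

Fixpoint leqf (k : nat) (s t : raw) {struct k} : Prop :=
  match k with
  | 0 => False
  | k'.+1 =>
      match t with
      | Var y => match s with Var x => ple x y | _ => False end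
      | Node m R' H' tau ch' =>
          (exists j, leqf k' s (ch' j)) \/
          match s with
          | Var _ => False
          | Node n R H sg ch => union_le (leqf k') sg ch tau ch'
          end
      end
  end.

(* s <= t, recursion on l(s) + l(t) (fuel l(s)+l(t)+1 suffices, since
   every recursive call strictly decreases l(s)+l(t)) *)
Definition tle (s t : raw) : Prop := leqf (len s + len t).+1 s t.

Fixpoint valid (s : raw) : Prop :=
  match s with
  | Var _ => True
  | Node n R H sg ch =>
      (forall i, valid (ch i)) /\
      (forall i j, eqv (ch i) (ch j) -> i = j) /\
      (forall i j, R i j <-> tle (ch i) (ch j)) /\
      (forall i, List.In i (dsupp sg))
  end.

End Terms.

From mathcomp Require Import all_boot.
From Stdlib Require List.

Set Implicit Arguments.
Unset Strict Implicit.
Unset Printing Implicit Defensive.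

(* Induction along the recursion defining s <= t.  If s <= t holds because s <= r' for an
   immediate subterm r' of t, then h(s) <= h(r') < h(t).  If it holds by
   clause (iii') for s = o(a, sigma) and t = o(b, tau), every r in a lies in
   the support of sigma, so by normality (applied in W(a \cup b)) some r' in
   b with r <= r' exists; hence h(r) <= h(r') for every r in a and again
   h(s) <= h(t). *)

Section Height.
Variables (D : PODilator) (X : PO).

Lemma height_Node n (R : 'I_n -> 'I_n -> Prop) (H : POax R) (sg : D (ordPO H))
    (ch : 'I_n -> raw D X) :
  height (Node sg ch) = \max_(i < n) (height (ch i)).+1.
Proof. by rewrite /= foldrE big_map big_enum. Qed.

Lemma height_child_lt n (R : 'I_n -> 'I_n -> Prop) (H : POax R)
    (sg : D (ordPO H)) (ch : 'I_n -> raw D X) (i : 'I_n) :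
  height (ch i) < height (Node sg ch).
Proof. by rewrite height_Node; exact: (leq_bigmax i). Qed.

Lemma height_Node_le n (R : 'I_n -> 'I_n -> Prop) (H : POax R)
    (sg : D (ordPO H)) (ch : 'I_n -> raw D X)
    m (R' : 'I_m -> 'I_m -> Prop) (H' : POax R')
    (tau : D (ordPO H')) (ch' : 'I_m -> raw D X) :
  (forall i, exists j, height (ch i) <= height (ch' j)) ->
  height (Node sg ch) <= height (Node tau ch').
Proof.
move=> cofinal; rewrite height_Node; apply/bigmax_leqP => i _.
have [j le_ij] := cofinal i.
exact: leq_ltn_trans le_ij (height_child_lt tau ch' j).
Qed.

Lemma union_le_cofinal (HD : normal D) (L : raw D X -> raw D X -> Prop)
    n (R : 'I_n -> 'I_n -> Prop) (H : POax R)
    (sg : D (ordPO H)) (ch : 'I_n -> raw D X)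
    m (R' : 'I_m -> 'I_m -> Prop) (H' : POax R')
    (tau : D (ordPO H')) (ch' : 'I_m -> raw D X) :
  (forall i, List.In i (dsupp sg)) -> union_le L sg ch tau ch' ->
  forall i, exists j, L (ch i) (ch' j).
Proof.
move=> supp_full [k [Ru [Hu [ia [ib [_ [_ [_ [_ [_ [Lab [_ [_ le_ab]]]]]]]]]]]]] i.
have supp_ia : List.In (ia i) (dsupp (dmap D ia sg)).
  by apply/dsupp_nat; exists i.
have [y [supp_y le_y]] := HD _ _ _ le_ab _ supp_ia.
have [j [_ ib_j]] := proj1 (dsupp_nat ib tau y) supp_y.
by exists j; apply/Lab; rewrite ib_j.
Qed.

Lemma leqf_height (HD : normal D) k (s t : raw D X) :
  valid s -> leqf k s t -> height s <= height t.
Proof.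
elim: k s t => [//|k IH] s [y|m R' H' tau ch'] vs; first by case: s vs.
case=> [[j le_s_j]|].
  exact: leq_trans (IH _ _ vs le_s_j) (ltnW (height_child_lt tau ch' j)).
case: s vs => [//|n R H sg ch] [valid_ch [_ [_ supp_full]]] le_union.
apply: height_Node_le => i.
have [j le_ij] := union_le_cofinal HD supp_full le_union i.
by exists j; exact: IH (valid_ch i) le_ij.
Qed.

End Height.

Theorem lemma2p5 (D : PODilator) (HD : normal D) (X : PO) (s t : raw D X) :
  valid s -> valid t -> tle s t -> height s <= height t.
Proof. by move=> vs _; exact: leqf_height. Qed.
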